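(* Let $K$ be a field and $X$ a finite connected poset. For every Lie automorphism $\varphi$ of $I(X,K)$, the map $\widetilde\varphi$ is a bijective $K$-linear map of $I(X,K)$, and $\varphi\mapsto\widetilde\varphi$ is a group homomorphism from $\mathrm{LAut}(I(X,K))$ to $\mathrm{GL}(I(X,K))$, i.e. $\widetilde{\varphi\circ\psi}=\widetilde\varphi\circ\widetilde\psi$.
   Context: $I(X,K)$ is the incidence algebra: functions $f:X\times X\to K$ with $f(x,y)=0$ unless $x\le y$, product $(fg)(x,y)=\sum_{x\le t\le y}f(x,t)g(t,y)$; $e_{xy}$ ($x\le y$) is the basis element equal to $1$ at $(x,y)$ and $0$ elsewhere. $\mathrm{LAut}(I(X,K))$ is the group of bijective linear maps preserving $[f,g]=fg-gf$; $\mathrm{GL}(I(X,K))$ is the group of bijective $K$-linear maps. Let $l(\lfloor x,y\rfloor)$ be the maximum length of a chain in $\{z:x\le z\le y\}$, $L_i=\mathrm{span}_K\{e_{xy}: l(\lfloor x,y\rfloor)=i\}$ ($i\ge 0$), so $I(X,K)=\bigoplus_i L_i$. For $\varphi\in\mathrm{LAut}(I(X,K))$, $\widetilde\varphi$ is the linear map sending $e_{xy}\in L_i$ to the $L_i$-component of $\varphi(e_{xy})$ (one has $\varphi(e_{xy})-\widetilde\varphi(e_{xy})\in\bigoplus_{k>i}L_k$). Connected means any two elements are joined by a sequence in which consecutive elements are in a covering relation. *)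

From HB Require Import structures.
From mathcomp Require Import all_boot all_order all_algebra.
Set Implicit Arguments. Unset Strict Implicit. Unset Printing Implicit Defensive.
Import Order.TTheory GRing.Theory.
Local Open Scope order_scope.

(* Elements of I(X,K) are represented as functions X -> X -> K satisfying
   the support condition [inI]. *)
Section Incidence.
Variables (d : Order.disp_t) (X : finPOrderType d) (K : fieldType).

Definition inI (f : X -> X -> K) : Prop :=
  forall x y : X, ~~ (x <= y) -> f x y = 0%R.

Definition eI (x y : X) : X -> X -> K :=
  fun u v => if (u == x) && (v == y) then 1%R else 0%R.

Definition addI (f g : X -> X -> K) : X -> X -> K := fun u v => (f u v + g u v)%R.
Definition scaleI (a : K) (f : X -> X -> K) : X -> X -> K := fun u v => (a * f u v)%R.

Definition mulI (f g : X -> X -> K) : X -> X -> K :=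
  fun x y => (\sum_(t : X | (x <= t)%O && (t <= y)%O) f x t * g t y)%R.

Definition bracketI (f g : X -> X -> K) : X -> X -> K :=
  fun x y => (mulI f g x y - mulI g f x y)%R.

Definition covers (x y : X) : bool :=
  (x < y) && [forall z : X, ~~ ((x < z) && (z < y))].

Definition poset_connected : Prop :=
  forall x y : X, connect (fun a b => covers a b || covers b a) x y.

Definition is_chain (A : {set X}) : bool :=
  [forall a in A, forall b in A, (a <= b) || (b <= a)].

Definition lint (x y : X) : nat :=
  (\max_(A : {set X} | is_chain A && (A \subset [set z | (x <= z)%O && (z <= y)%O]))
     #|A|.-1)%N.

Definition compL (i : nat) (g : X -> X -> K) : X -> X -> K :=
  fun u v => if (u <= v) && (lint u v == i) then g u v else 0%R.

Definition LieAut (phi : (X -> X -> K) -> (X -> X -> K)) : Prop :=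
  [/\ (forall f, inI f -> inI (phi f)),
      (forall a f g, inI f -> inI g ->
         phi (addI (scaleI a f) g) = addI (scaleI a (phi f)) (phi g)),
      (forall f g, inI f -> inI g -> phi f = phi g -> f = g),
      (forall h, inI h -> exists2 f, inI f & phi f = h) &
      (forall f g, inI f -> inI g -> phi (bracketI f g) = bracketI (phi f) (phi g))].

Definition GLmap (phi : (X -> X -> K) -> (X -> X -> K)) : Prop :=
  [/\ (forall f, inI f -> inI (phi f)),
      (forall a f g, inI f -> inI g ->
         phi (addI (scaleI a f) g) = addI (scaleI a (phi f)) (phi g)),
      (forall f g, inI f -> inI g -> phi f = phi g -> f = g) &
      (forall h, inI h -> exists2 f, inI f & phi f = h)].

Definition tilde (phi : (X -> X -> K) -> (X -> X -> K)) (f : X -> X -> K)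
  : X -> X -> K :=
  fun u v => (\sum_(p : X * X | (p.1 <= p.2)%O)
                f p.1 p.2 * compL (lint p.1 p.2) (phi (eI p.1 p.2)) u v)%R.

End Incidence.

From HB Require Import structures.
From mathcomp Require Import all_boot all_order all_algebra.
From mathcomp Require Import zify.
From Stdlib Require Import FunctionalExtensionality ClassicalEpsilon.
Set Implicit Arguments. Unset Strict Implicit. Unset Printing Implicit Defensive.
Import Order.TTheory GRing.Theory.

(* Let F_k be the span of the e_xy with l(x,y) >= k.  Since l is superadditive
   along x <= t <= y, [F_a, F_b] is contained in F_(a+b).  For x < y we have
   e_xy = [e_xx, e_xy], whose image under a Lie endomorphism phi is a bracket and
   hence vanishes on the diagonal, i.e. lies in F_1; for l(x,y) > 1 we write
   e_xy = [e_xz, e_zy] with x < z and l(z,y) >= l(x,y) - 1.  By induction phi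
   preserves every F_k.  Consequently tilde phi is the associated graded map
   f |-> ((u,v) |-> phi(f_i)(u,v)), i = l(u,v), and taking the associated graded
   map is functorial on filtration-preserving linear maps: it turns composition
   into composition and the inverse of phi into an inverse of tilde phi. *)

(** * Lengths of intervals *)

Section Length.
Variables (d : Order.disp_t) (X : finPOrderType d).
Implicit Types (x y z u v t : X) (A B : {set X}).
Local Open Scope order_scope.

Definition itv x y : {set X} := [set z | x <= z <= y].

Lemma is_chainP A : reflect {in A &, forall a b, (a <= b) || (b <= a)} (is_chain A).
Proof.
apply: (iffP forall_inP) => [cA a b aA bA | cA a aA].
  by move/forall_inP: (cA a aA); apply.
by apply/forall_inP => b bA; apply: cA.
Qed.

Lemma sub_chain A B : B \subset A -> is_chain A -> is_chain B.
Proof.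
move=> /subsetP sBA /is_chainP cA; apply/is_chainP => a b aB bB.
exact: cA (sBA a aB) (sBA b bB).
Qed.

Lemma lint_max x y A : is_chain A -> A \subset itv x y -> (#|A|.-1 <= lint x y)%N.
Proof.
by move=> cA sA; apply: (@leq_bigmax_cond _ _ (fun A : {set X} => #|A|.-1)); rewrite cA.
Qed.

Lemma lint_witness x y :
  exists A, [/\ is_chain A, A \subset itv x y & lint x y = #|A|.-1].
Proof.
have chains_gt0 : (0 < #|[pred A : {set X} | is_chain A && (A \subset itv x y)]|)%N.
  apply/card_gt0P; exists set0; rewrite inE sub0set andbT.
  by apply/is_chainP => a; rewrite inE.
have [A] := eq_bigmax_cond (fun A : {set X} => #|A|.-1) chains_gt0.
by rewrite inE => /andP[cA sA] lA; exists A.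
Qed.

Lemma chain_min A : is_chain A -> A != set0 ->
  exists2 y, y \in A & {in A, forall z, y <= z}.
Proof.
move=> /is_chainP cA /set0Pn[y0 y0A].
case: (arg_minnP (fun y => #|[set z | z < y]|) y0A) => y yA ymin.
exists y => // z zA; have /orP[// | zy] := cA y z yA zA.
have [-> // | nzy] := eqVneq z y.
have lt_zy : z < y by rewrite lt_neqAle nzy.
have : [set w | w < z] \proper [set w | w < y].
  apply/properP; split; last by exists z; rewrite !inE ?lt_zy ?ltxx.
  by apply/subsetP => w; rewrite !inE => /lt_trans; apply.
by move/proper_card; rewrite ltnNge ymin.
Qed.

Lemma lint_refl x : lint x x = 0%N.
Proof.
apply/eqP; rewrite -leqn0; apply/bigmax_leqP => A /andP[_ sA].
have : A \subset [set x].
  apply/subsetP => z /(subsetP sA); rewrite !inE => /andP[xz zx].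
  by apply/eqP; apply: le_anti; rewrite xz zx.
by move/subset_leq_card; rewrite cards1; case: #|A| => [|[]].
Qed.

Lemma lint_gt0 x y : x < y -> (0 < lint x y)%N.
Proof.
move=> lt_xy; have := @lint_max x y [set x; y].
rewrite cards2 (lt_eqF lt_xy); apply.
  by apply/is_chainP => a b; rewrite !inE => /orP[]/eqP-> /orP[]/eqP->;
     rewrite ?lexx ?(ltW lt_xy) ?orbT.
by apply/subsetP => z; rewrite !inE => /orP[]/eqP->; rewrite ?lexx ?(ltW lt_xy).
Qed.

Lemma lint_superadd u t v : u <= t -> t <= v -> (lint u t + lint t v <= lint u v)%N.
Proof.
move=> ut tv.
have [A [/is_chainP cA /subsetP sA ->]] := lint_witness u t.
have [B [/is_chainP cB /subsetP sB ->]] := lint_witness t v.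
have leAB a b : a \in A -> b \in B -> a <= b.
  move=> /sA + /sB; rewrite !inE => /andP[_ at_] /andP[tb _].
  exact: le_trans at_ tb.
have cardI : (#|A :&: B| <= 1)%N.
  rewrite -(cards1 t); apply/subset_leq_card/subsetP => z.
  rewrite !inE => /andP[/sA + /sB]; rewrite !inE => /andP[_ zt] /andP[tz _].
  by apply/eqP/le_anti; rewrite zt tz.
have : (#|A :|: B|.-1 <= lint u v)%N.
  apply: lint_max.
    apply/is_chainP => a b; rewrite !inE => /orP[] aX /orP[] bX.
    - exact: cA.
    - by rewrite (leAB a b).
    - by rewrite (leAB b a) ?orbT.
    - exact: cB.
  apply/subsetP => z; rewrite !inE => /orP[/sA | /sB]; rewrite inE => /andP[uz zv].
    by rewrite uz (le_trans zv tv).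
  by rewrite (le_trans ut uz) zv.
have := cardsUI A B; have := subset_leq_card (subsetIl A B).
have := subset_leq_card (subsetIr A B); lia.
Qed.

Lemma lint_step u v k : (k < lint u v)%N ->
  exists y, [/\ u < y, y <= v & (k <= lint y v)%N].
Proof.
have [A [cA sA ->]] := lint_witness u v => lt_k.
have cA' : is_chain (A :\ u) by apply: sub_chain cA; apply: subsetDl.
have card_A' : (k < #|A :\ u|)%N.
  by move: lt_k; rewrite (cardsD1 u A); case: (u \in A) => /=; lia.
have [|y /setD1P[nyu yA] ymin] := chain_min cA'.
  by rewrite -card_gt0; apply: leq_ltn_trans card_A'.
have /andP[uy yv] : u <= y <= v by move: (subsetP sA y yA); rewrite inE.
exists y; split=> //; first by rewrite lt_neqAle eq_sym nyu.
have := @lint_max y v _ cA'; rewrite -ltnS prednK; last exact: leq_ltn_trans card_A'.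
move=> le_card; suff /le_card : A :\ u \subset itv y v by lia.
apply/subsetP => z zA'; rewrite inE ymin //=.
by move: zA' => /setD1P[_ /(subsetP sA)]; rewrite inE => /andP[].
Qed.

End Length.

Local Open Scope ring_scope.

Section BigSums.
Variables (T : finType) (V : nmodType).

Lemma sum_if_eq (P : pred T) y (G : T -> V) :
  \sum_(t | P t) (if t == y then G t else 0) = if P y then G y else 0.
Proof.
rewrite -big_mkcondr; case: ifP => Py.
  by rewrite (big_pred1 y) // => t /=; case: eqP => [->|]; rewrite ?Py ?andbF.
by rewrite big1 // => t /andP[Pt /eqP ety]; rewrite ety Py in Pt.
Qed.

Lemma sum_neq0 (P : pred T) (G : T -> V) :
  \sum_(t | P t) G t != 0 -> exists2 t, P t & G t != 0.
Proof.
move=> nz; apply/exists_inP; apply: contraNT nz => /exists_inPn zero.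
by rewrite big1 // => t /zero; rewrite negbK => /eqP.
Qed.

End BigSums.

(** * The filtration of I(X,K) by length *)

Section Incidence.
Variables (d : Order.disp_t) (X : finPOrderType d) (K : fieldType).
Notation F := (X -> X -> K).
Implicit Types (f g h : F) (phi psi : F -> F) (x y z u v : X).

Lemma funext2 f g : (forall a b, f a b = g a b) -> f = g.
Proof. by move=> fg; do 2 apply: functional_extensionality => ?; apply: fg. Qed.

Definition zeroI : F := fun _ _ => 0.

Definition inF (k : nat) f : Prop :=
  forall a b, f a b != 0 -> (a <= b)%O && (k <= lint a b)%N.

Lemma inF_inI k f : inF k f -> inI f.
Proof. by move=> fk a b nab; apply/eqP; apply: contraNT nab => /fk /andP[]. Qed.

Lemma inI_inF0 f : inI f -> inF 0 f.
Proof. by move=> fI a b; rewrite andbT; apply: contraR => /fI ->. Qed.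

Lemma inF_compL i f : inF i (compL i f).
Proof.
by move=> a b; rewrite /compL; case: ifP => [/andP[-> /eqP ->] | _]; rewrite ?leqnn ?eqxx.
Qed.

Lemma inI_compL i f : inI (compL i f).
Proof. exact: inF_inI (@inF_compL i f). Qed.

Lemma inF_subr_compL i g :
  inF i g -> inF i.+1 (fun a b => g a b - compL i g a b).
Proof.
move=> gi a b; rewrite /compL; case: ifP => [_|]; first by rewrite subrr eqxx.
rewrite subr0 => not_i /gi /andP[ab le_i]; rewrite ab /=.
by move: not_i; rewrite ab ltn_neqAle le_i andbT eq_sym => /negbT.
Qed.

Lemma inI_eI x y : (x <= y)%O -> inI (eI K x y).
Proof.
by move=> xy u v; rewrite /eI; case: (u =P x) => [->|//]; case: (v =P y) => [->|//]; rewrite xy.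
Qed.

Lemma inI_add a f g : inI f -> inI g -> inI (addI (scaleI a f) g).
Proof. by move=> fI gI u v nuv; rewrite /addI /scaleI fI // gI // mulr0 addr0. Qed.

Lemma mulI_eIl x y g u v : mulI (eI K x y) g u v =
  if (u == x) && (u <= y)%O && (y <= v)%O then g y v else 0.
Proof.
rewrite /mulI (eq_bigr (fun t => if t == y then (if u == x then g t v else 0) else 0)).
  by rewrite sum_if_eq; case: (u == x); rewrite ?andbF //=; case: ifP.
by move=> t _; rewrite /eI; case: (t == y); case: (u == x); rewrite ?mul1r ?mul0r.
Qed.

Lemma mulI_eIr x y g u v : mulI g (eI K x y) u v =
  if (v == y) && (u <= x)%O && (x <= v)%O then g u x else 0.
Proof.
rewrite /mulI (eq_bigr (fun t => if t == x then (if v == y then g u t else 0) else 0)).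
  by rewrite sum_if_eq; case: (v == y); rewrite ?andbF //=; case: ifP.
by move=> t _; rewrite /eI; case: (t == x); case: (v == y); rewrite ?mulr1 ?mulr0 ?andbF.
Qed.

Lemma bracketI_eI x y z : (x <= y)%O -> (y <= z)%O -> x != z ->
  eI K x z = bracketI (eI K x y) (eI K y z).
Proof.
move=> xy yz nxz; apply: funext2 => u v.
rewrite /bracketI mulI_eIl mulI_eIr /eI.
have [->|_] := eqVneq u x; last by rewrite /= (negbTE nxz) !andbF !if_same subrr.
rewrite xy eqxx (negbTE nxz) !andbF if_same subr0 /=.
by have [->|_] := eqVneq v z; rewrite ?yz ?if_same.
Qed.

Lemma mulI_diag f g u : mulI f g u u = f u u * g u u.
Proof.
rewrite /mulI (eq_bigl (pred1 u)) ?big_pred1_eq // => t /=.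
by apply/andP/eqP => [[ut tu] | ->]; [apply: le_anti; rewrite tu ut | rewrite lexx].
Qed.

Lemma bracketI_diag f g u : bracketI f g u u = 0.
Proof. by rewrite /bracketI !mulI_diag mulrC subrr. Qed.

Lemma inF_mulI a b f g : inF a f -> inF b g -> inF (a + b) (mulI f g).
Proof.
move=> fa gb u v /sum_neq0[t /andP[ut tv]]; rewrite mulf_eq0 negb_or.
case/andP=> /fa /andP[_ la] /gb /andP[_ lb]; rewrite (le_trans ut tv).
exact: leq_trans (leq_add la lb) (lint_superadd ut tv).
Qed.

Lemma inF_bracketI a b f g : inF a f -> inF b g -> inF (a + b) (bracketI f g).
Proof.
move=> fa gb u v; rewrite /bracketI.
have [-> | nz] := eqVneq (mulI f g u v) 0; last by move=> _; apply: inF_mulI nz.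
by rewrite sub0r oppr_eq0 addnC; apply: inF_mulI.
Qed.

Lemma inI_bracketI f g : inI f -> inI g -> inI (bracketI f g).
Proof. by move=> /inI_inF0 f0 /inI_inF0 g0; apply: inF_inI (inF_bracketI f0 g0). Qed.

Definition linearI phi : Prop := forall a f g, inI f -> inI g ->
  phi (addI (scaleI a f) g) = addI (scaleI a (phi f)) (phi g).

Lemma linearI0 phi : linearI phi -> phi zeroI = zeroI.
Proof.
move=> phi_lin; have := phi_lin (-1) zeroI zeroI (fun _ _ _ => erefl) (fun _ _ _ => erefl).
have -> : addI (scaleI (-1) zeroI) zeroI = zeroI.
  by apply: funext2 => a b; rewrite /addI /scaleI /zeroI mulr0 addr0.
move=> E; apply: funext2 => a b; move/(congr1 (fun h => h a b)): E.
by rewrite /addI /scaleI mulN1r addNr.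
Qed.

Lemma inI_sum (r : seq (X * X)) (P : pred (X * X)) (c : X * X -> K) :
  (forall p, P p -> (p.1 <= p.2)%O) ->
  inI (fun a b => \sum_(p <- r | P p) c p * eI K p.1 p.2 a b).
Proof.
move=> Ple u v nuv; rewrite big1 // => p /Ple le_p.
by rewrite inI_eI ?mulr0.
Qed.

Lemma linearI_sum phi (r : seq (X * X)) (P : pred (X * X)) (c : X * X -> K) :
  linearI phi -> (forall p, P p -> (p.1 <= p.2)%O) ->
  phi (fun a b => \sum_(p <- r | P p) c p * eI K p.1 p.2 a b) =
  (fun a b => \sum_(p <- r | P p) c p * phi (eI K p.1 p.2) a b).
Proof.
move=> phi_lin Ple; elim: r => [|p r IH].
  have -> : (fun a b => \sum_(q <- [::] | P q) c q * eI K q.1 q.2 a b) = zeroI.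
    by apply: funext2 => a b; rewrite big_nil.
  by rewrite linearI0 //; apply: funext2 => a b; rewrite big_nil.
set S := (fun a b => \sum_(q <- r | P q) c q * eI K q.1 q.2 a b) in IH *.
case Pp: (P p).
  have -> : (fun a b => \sum_(q <- p :: r | P q) c q * eI K q.1 q.2 a b) =
            addI (scaleI (c p) (eI K p.1 p.2)) S.
    by apply: funext2 => a b; rewrite big_cons Pp.
  rewrite phi_lin ?IH; [|exact: inI_eI (Ple p Pp)|exact: inI_sum].
  by apply: funext2 => a b; rewrite big_cons Pp.
have -> : (fun a b => \sum_(q <- p :: r | P q) c q * eI K q.1 q.2 a b) = S.
  by apply: funext2 => a b; rewrite big_cons Pp.
by rewrite IH; apply: funext2 => a b; rewrite big_cons Pp.
Qed.

Lemma eI_expand (P : pred (X * X)) g : (forall a b, g a b != 0 -> P (a, b)) ->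
  g = fun a b => \sum_(p | P p) g p.1 p.2 * eI K p.1 p.2 a b.
Proof.
move=> gP; apply: funext2 => a b.
rewrite (eq_bigr (fun p => if p == (a, b) then g a b else 0)); last first.
  case=> x y _; rewrite /eI /= xpair_eqE (eq_sym a) (eq_sym b).
  by case: (x =P a) => [->|]; case: (y =P b) => [->|]; rewrite ?mulr1 ?mulr0.
rewrite sum_if_eq; case: ifP => // nPab.
by apply/eqP; apply: contraFT nPab => /gP.
Qed.

(** * Lie endomorphisms preserve the filtration *)

Definition LieEnd phi : Prop :=
  [/\ forall f, inI f -> inI (phi f), linearI phi &
      forall f g, inI f -> inI g -> phi (bracketI f g) = bracketI (phi f) (phi g)].

Lemma LieAut_End phi : LieAut phi -> LieEnd phi.
Proof. by case. Qed.

Lemma LieEnd_comp phi psi : LieEnd phi -> LieEnd psi -> LieEnd (phi \o psi).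
Proof.
case=> phiI phi_lin phi_br [psiI psi_lin psi_br]; split.
- by move=> f /psiI; apply: phiI.
- by move=> a f g fI gI /=; rewrite psi_lin // phi_lin //; apply: psiI.
- by move=> f g fI gI /=; rewrite psi_br // phi_br //; apply: psiI.
Qed.

Section LieEndomorphism.
Variable phi : F -> F.
Hypothesis phiE : LieEnd phi.

(* e_xy = [e_xx, e_xy] for x < y, and brackets vanish on the diagonal. *)
Lemma LieEnd_eI_lt x y : (x < y)%O -> inF 1 (phi (eI K x y)).
Proof.
case: phiE => phiI _ phi_br lt_xy.
have le_xy := ltW lt_xy; have ne_xy : x != y by rewrite lt_eqF.
have [exxI exyI] := (inI_eI (lexx x), inI_eI le_xy).
rewrite (bracketI_eI (lexx x) le_xy ne_xy) phi_br // => a b nz.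
have /andP[le_ab _] := inF_bracketI (inI_inF0 (phiI _ exxI)) (inI_inF0 (phiI _ exyI)) nz.
rewrite le_ab lint_gt0 // lt_neqAle le_ab andbT.
by apply: contraNneq nz => ->; rewrite bracketI_diag.
Qed.

Lemma LieEnd_eI k x y : (x <= y)%O -> (k <= lint x y)%N -> inF k (phi (eI K x y)).
Proof.
case: phiE => phiI _ phi_br.
elim: k x y => [|k IH] x y le_xy le_k; first exact: inI_inF0 (phiI _ (inI_eI le_xy)).
have lt_xy : (x < y)%O.
  by rewrite lt_neqAle le_xy andbT; apply: contraTneq le_k => ->; rewrite lint_refl.
case: k IH le_k => [_ _ | k IH le_k]; first exact: LieEnd_eI_lt.
have [z [lt_xz le_zy le_kz]] := lint_step le_k.
have ne_xy : x != y by rewrite lt_eqF.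
rewrite (bracketI_eI (ltW lt_xz) le_zy ne_xy) phi_br; last 2 first.
- exact: inI_eI (ltW lt_xz).
- exact: inI_eI le_zy.
by rewrite -add1n; apply: inF_bracketI (LieEnd_eI_lt lt_xz) (IH z y le_zy le_kz).
Qed.

Lemma LieEnd_inF k g : inF k g -> inF k (phi g).
Proof.
case: phiE => _ phi_lin _ gk.
rewrite (eI_expand (P := fun p => (p.1 <= p.2)%O && (k <= lint p.1 p.2)%N) gk).
rewrite linearI_sum // => [a b /sum_neq0[[x y] /andP[le_xy le_k]]|p /andP[] //].
by rewrite mulf_eq0 negb_or => /andP[_]; apply: LieEnd_eI.
Qed.

Lemma LieEnd_compL i g u v : inF i g -> lint u v = i -> phi (compL i g) u v = phi g u v.
Proof.
case: phiE => _ phi_lin _ gi luv.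
set r := fun a b => g a b - compL i g a b.
have ri1 : inF i.+1 r := inF_subr_compL gi.
have -> : phi g = addI (scaleI 1 (phi (compL i g))) (phi r).
  rewrite -phi_lin; [|exact: inI_compL|exact: inF_inI ri1].
  by congr phi; apply: funext2 => a b; rewrite /addI /scaleI mul1r addrC subrK.
rewrite /addI /scaleI mul1r; suff -> : phi r u v = 0 by rewrite addr0.
by apply/eqP; apply: contraT => /(LieEnd_inF ri1) /andP[_]; rewrite luv ltnn.
Qed.

End LieEndomorphism.

(** * The associated graded map *)

Definition gr phi f : F :=
  fun u v => if (u <= v)%O then phi (compL (lint u v) f) u v else 0.

Lemma inI_gr phi f : inI (gr phi f).
Proof. by move=> u v /negbTE nuv; rewrite /gr nuv. Qed.

Lemma tilde_gr phi f : linearI phi -> tilde phi f = gr phi f.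
Proof.
move=> phi_lin; apply: funext2 => u v; rewrite /tilde /gr.
case: ifP => le_uv; last by rewrite big1 // => p _; rewrite /compL le_uv mulr0.
set i := lint u v.
have compLP a b : compL i f a b != 0 -> (a <= b)%O && (lint a b == i).
  by rewrite /compL; case: ifP => // _; rewrite eqxx.
rewrite [compL i f](eI_expand (P := fun p => (p.1 <= p.2)%O && (lint p.1 p.2 == i)) compLP).
rewrite linearI_sum // => [|p /andP[] //].
rewrite big_mkcond [RHS]big_mkcond; apply: eq_bigr => -[x y] _ /=.
rewrite /compL le_uv /=; case: (x <= y)%O => //=.
by rewrite (eq_sym i); case: eqP; rewrite ?mulr0.
Qed.

Lemma compL_gr phi i f : compL i (gr phi f) = compL i (phi (compL i f)).
Proof.
by apply: funext2 => a b; rewrite /compL /gr; case: (a <= b)%O; case: eqP => // ->.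
Qed.

Lemma gr_comp phi psi f : LieEnd phi -> LieEnd psi -> gr phi (gr psi f) = gr (phi \o psi) f.
Proof.
move=> phiE psiE; apply: funext2 => u v; rewrite /gr; case: ifP => // _.
by rewrite compL_gr (LieEnd_compL phiE) //; apply: (LieEnd_inF psiE); apply: inF_compL.
Qed.

Lemma gr_id f : inI f -> gr id f = f.
Proof.
move=> fI; apply: funext2 => u v; rewrite /gr /compL.
by case: ifP => [le_uv | /negbT /fI ->]; rewrite ?le_uv ?eqxx.
Qed.

Lemma eq_gr phi phi' f : (forall g, inI g -> phi g = phi' g) -> gr phi f = gr phi' f.
Proof. by move=> phi_eq; apply: funext2 => u v; rewrite /gr phi_eq //; apply: inI_compL. Qed.

(* Only meaningful on I(X,K); elsewhere [epsilon] returns an arbitrary value. *)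
Definition invI phi : F -> F :=
  fun h => epsilon (inhabits zeroI) (fun f => inI f /\ phi f = h).

Lemma invI_spec phi h : LieAut phi -> inI h -> inI (invI phi h) /\ phi (invI phi h) = h.
Proof.
case=> _ _ _ phi_surj _ /phi_surj[f fI phif].
by apply: (epsilon_spec (inhabits zeroI) (fun f => inI f /\ phi f = h)); exists f.
Qed.

Lemma invIK phi f : LieAut phi -> inI f -> invI phi (phi f) = f.
Proof.
move=> phiA fI; have [phiI _ phi_inj _ _] := phiA.
by have [? ?] := invI_spec phiA (phiI f fI); apply: phi_inj.
Qed.

Lemma LieEnd_invI phi : LieAut phi -> LieEnd (invI phi).
Proof.
move=> phiA; have [phiI phi_lin phi_inj _ phi_br] := phiA.
have invP h hI := invI_spec (h := h) phiA hI.
split.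
- by move=> h /invP[].
- move=> a f g fI gI; have [fI' phif] := invP f fI; have [gI' phig] := invP g gI.
  have [sI' phis] := invP _ (inI_add a fI gI).
  apply: phi_inj; [exact: sI' | exact: inI_add fI' gI' |].
  by rewrite phis phi_lin // phif phig.
- move=> f g fI gI; have [fI' phif] := invP f fI; have [gI' phig] := invP g gI.
  have [bI' phib] := invP _ (inI_bracketI fI gI).
  apply: phi_inj; [exact: bI' | exact: inI_bracketI fI' gI' |].
  by rewrite phib phi_br // phif phig.
Qed.

Lemma gr_invIK phi f : LieAut phi -> inI f -> gr (invI phi) (gr phi f) = f.
Proof.
move=> phiA fI; rewrite gr_comp; [|exact: LieEnd_invI|exact: LieAut_End].
by rewrite (eq_gr (phi' := id)) ?gr_id // => g; apply: invIK.
Qed.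

Lemma gr_invIVK phi h : LieAut phi -> inI h -> gr phi (gr (invI phi) h) = h.
Proof.
move=> phiA hI; rewrite gr_comp; [|exact: LieAut_End|exact: LieEnd_invI].
by rewrite (eq_gr (phi' := id)) ?gr_id // => g /(invI_spec phiA)[].
Qed.

Lemma inI_tilde phi f : inI (tilde phi f).
Proof.
by move=> u v /negbTE nuv; rewrite /tilde big1 // => p _; rewrite /compL nuv mulr0.
Qed.

Lemma linearI_tilde phi : linearI (tilde phi).
Proof.
move=> a f g _ _; apply: funext2 => u v.
rewrite /tilde /addI /scaleI mulr_sumr -big_split /=.
by apply: eq_bigr => p _; rewrite mulrDl mulrA.
Qed.

Lemma tilde_comp phi psi f : LieEnd phi -> LieEnd psi ->
  tilde (phi \o psi) f = tilde phi (tilde psi f).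
Proof.
move=> phiE psiE; have [[_ phi_lin _] [_ psi_lin _]] := (phiE, psiE).
have [_ comp_lin _] := LieEnd_comp phiE psiE.
by rewrite !tilde_gr // gr_comp.
Qed.

Lemma GLmap_tilde phi : LieAut phi -> GLmap (tilde phi).
Proof.
move=> phiA; have [_ phi_lin _ _ _] := phiA.
split; [by move=> f _; apply: inI_tilde | exact: linearI_tilde | |].
- move=> f g fI gI; rewrite !tilde_gr // => /(congr1 (gr (invI phi))).
  by rewrite !gr_invIK.
- move=> h hI; exists (gr (invI phi) h); first exact: inI_gr.
  by rewrite tilde_gr // gr_invIVK.
Qed.

End Incidence.

Theorem proposition4p2 (d : Order.disp_t) (X : finPOrderType d) (K : fieldType) :
  poset_connected X ->
  (forall phi : (X -> X -> K) -> (X -> X -> K),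
      LieAut phi -> GLmap (tilde phi)) /\
  (forall phi psi : (X -> X -> K) -> (X -> X -> K),
      LieAut phi -> LieAut psi ->
      forall f : X -> X -> K, inI f ->
        tilde (fun g => phi (psi g)) f = tilde phi (tilde psi f)).
Proof.
move=> _; split=> [phi | phi psi phiA psiA f _]; first exact: GLmap_tilde.
by apply: tilde_comp; apply: LieAut_End.
Qed.
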